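(* Let $\{\alpha_n\}$ and $\{\beta_n\}$ be sequences in $[0,1]$, $\{\tau_n\}$ a nonnegative sequence, and $r\in\mathbb Z^+$ such that $\sum_{n=1}^\infty\tau_n|\alpha_n-\beta_n|^r<\infty$. If $\sum_{n=1}^\infty\tau_n\beta_n<\infty$, then $\sum_{n=1}^\infty\tau_n\alpha_n^r<\infty$. *)

From Stdlib Require Import Reals.
From Coquelicot Require Import Coquelicot.

(* Pointwise, alpha^r <= (|alpha - beta| + beta)^r <= 2^r (|alpha - beta|^r + beta^r)
   <= 2^r (|alpha - beta|^r + beta), since beta^r <= beta on [0, 1]; multiply by
   tau and apply the comparison test. *)
From Stdlib Require Import Reals Lra Lia.
From Coquelicot Require Import Coquelicot.
Open Scope R_scope.

Lemma pow_le_self (b : R) (r : nat) : 0 <= b <= 1 -> (1 <= r)%nat -> b ^ r <= b.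
Proof.
  intros Hb Hr; destruct r as [|k]; [lia|]; simpl.
  assert (Hbk : b ^ k <= 1) by (rewrite <- (pow1 k); apply pow_incr; lra).
  assert (0 <= b ^ k) by (apply pow_le; lra).
  nra.
Qed.

Lemma pow_plus_le (x y : R) (r : nat) :
  0 <= x -> 0 <= y -> (x + y) ^ r <= 2 ^ r * (x ^ r + y ^ r).
Proof.
  intros Hx Hy.
  assert (Hmax : (x + y) ^ r <= 2 ^ r * Rmax x y ^ r).
  { rewrite <- Rpow_mult_distr; apply pow_incr.
    split; [lra|]; generalize (Rmax_l x y) (Rmax_r x y); lra. }
  assert (Hmax_le : Rmax x y ^ r <= x ^ r + y ^ r).
  { generalize (pow_le x r Hx) (pow_le y r Hy).
    apply Rmax_case; lra. }
  generalize (pow_le 2 r ltac:(lra)); nra.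
Qed.

Lemma pow_le_dist_pow_plus (a b : R) (r : nat) :
  0 <= a -> 0 <= b <= 1 -> (1 <= r)%nat ->
  a ^ r <= 2 ^ r * (Rabs (a - b) ^ r + b).
Proof.
  intros Ha Hb Hr.
  assert (Hdist : a <= Rabs (a - b) + b)
    by (generalize (Rle_abs (a - b)); lra).
  apply Rle_trans with ((Rabs (a - b) + b) ^ r); [apply pow_incr; lra|].
  apply Rle_trans with (2 ^ r * (Rabs (a - b) ^ r + b ^ r)).
  - apply pow_plus_le; [apply Rabs_pos | lra].
  - apply Rmult_le_compat_l; [apply pow_le; lra|].
    generalize (pow_le_self b r Hb Hr); lra.
Qed.

Lemma ex_series_le_scal_plus (u v w : nat -> R) (c : R) :
  (forall n, 0 <= u n <= c * (v n + w n)) ->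
  ex_series v -> ex_series w -> ex_series u.
Proof.
  intros Hu Hv Hw.
  apply (ex_series_le u (fun n => c * (v n + w n))).
  - intros n; change (Rabs (u n) <= c * (v n + w n)).
    rewrite Rabs_pos_eq; apply Hu.
  - exact (ex_series_scal_l c _ (ex_series_plus v w Hv Hw)).
Qed.

Theorem lemma4 (alpha beta tau : nat -> R) (r : nat) :
  (forall n, 0 <= alpha n <= 1) ->
  (forall n, 0 <= beta n <= 1) ->
  (forall n, 0 <= tau n) ->
  (1 <= r)%nat ->
  ex_series (fun n => tau n * (Rabs (alpha n - beta n)) ^ r) ->
  ex_series (fun n => tau n * beta n) ->
  ex_series (fun n => tau n * (alpha n) ^ r).
Proof.
  intros Halpha Hbeta Htau Hr Hdist Hbeta_sum.
  assert (Hbound : forall n, 0 <= tau n * alpha n ^ r <=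
    2 ^ r * (tau n * Rabs (alpha n - beta n) ^ r + tau n * beta n)).
  { intros n; split.
    - apply Rmult_le_pos; [apply Htau | apply pow_le, Halpha].
    - replace (2 ^ r * (tau n * Rabs (alpha n - beta n) ^ r + tau n * beta n))
        with (tau n * (2 ^ r * (Rabs (alpha n - beta n) ^ r + beta n))) by ring.
      apply Rmult_le_compat_l; [apply Htau|].
      apply pow_le_dist_pow_plus; [apply Halpha | apply Hbeta | exact Hr]. }
  exact (ex_series_le_scal_plus _ _ _ _ Hbound Hdist Hbeta_sum).
Qed.
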